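(* Let $m,n,r$ be positive integers with $r<\min\{m,n\}$ and let $\mathcal{M}=\{X\in\mathbb{R}^{m\times n} : \operatorname{rank}X\le r\}$. There exists a Zariski-open dense subset $\mathcal{U}$ of $\mathcal{M}$ such that the following holds for every $X^*=[x_1^*\cdots x_n^*]\in\mathcal{U}$ and every choice of permutation matrices $\tilde\Pi_1,\dots,\tilde\Pi_n\in\mathcal{P}_m$: setting $\tilde X=[\tilde\Pi_1x_1^*\cdots\tilde\Pi_nx_n^*]$, we have $\operatorname{rank}\underline{\pi}(\tilde X)\ge r$ for every $\underline{\pi}=(\Pi_1,\dots,\Pi_n)\in\mathcal{P}_m^n$, with equality if and only if $\underline{\pi}(\tilde X)=\Pi X^*$ for some $\Pi\in\mathcal{P}_m$.
   Context: $\mathcal{P}_m$ denotes the set of $m\times m$ permutation matrices and $\mathcal{P}_m^n=\prod_{j\in[n]}\mathcal{P}_m$ ($n$ ordered copies). For $\underline{\pi}=(\Pi_1,\dots,\Pi_n)\in\mathcal{P}_m^n$ and a matrix $Y=[y_1\cdots y_n]$ with columns $y_j$, $\underline{\pi}(Y)=[\Pi_1y_1\cdots\Pi_ny_n]$. $\mathcal{M}$ is the real algebraic variety defined by the vanishing of all $(r+1)\times(r+1)$ minors, equipped with the Zariski topology (closed sets are algebraic subvarieties of $\mathcal{M}$). *)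

From HB Require Import structures.
From mathcomp Require Import all_boot all_order all_algebra all_fingroup.
From mathcomp Require Import reals.
From mathcomp Require mpoly.
Set Implicit Arguments. Unset Strict Implicit. Unset Printing Implicit Defensive.
Import GRing.Theory Num.Theory.
Local Open Scope ring_scope.

Definition mxpoly_eval (R : realType) (m n : nat)
  (p : mpoly.mpoly (m * n) R) (X : 'M[R]_(m, n)) : R :=
  mpoly.meval (fun k : 'I_(m * n) => mxvec X 0 k) p.

Definition lowrank (R : realType) (m n r : nat) (X : 'M[R]_(m, n)) : Prop :=
  (\rank X <= r)%N.

Definition zariski_closed_in (R : realType) (m n : nat)
  (V Z : 'M[R]_(m, n) -> Prop) : Prop :=
  exists S : mpoly.mpoly (m * n) R -> Prop,
    forall X, Z X <-> (V X /\ forall p, S p -> mxpoly_eval p X = 0).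

Definition zariski_open_in (R : realType) (m n : nat)
  (V U : 'M[R]_(m, n) -> Prop) : Prop :=
  (forall X, U X -> V X) /\
  zariski_closed_in V (fun X => V X /\ ~ U X).

Definition zariski_dense_in (R : realType) (m n : nat)
  (V U : 'M[R]_(m, n) -> Prop) : Prop :=
  forall Z, zariski_closed_in V Z -> (forall X, U X -> Z X) -> forall X, V X -> Z X.

Definition permcols (R : realType) (m n : nat) (p : 'I_n -> 'S_m)
  (Y : 'M[R]_(m, n)) : 'M[R]_(m, n) :=
  \matrix_(i < m, j < n) (perm_mx (p j) *m col j Y) i 0.

From HB Require Import structures.
From mathcomp Require Import all_boot all_order all_algebra all_fingroup.
From mathcomp Require Import reals.
From mathcomp Require Import mpoly.
From Stdlib Require Import Classical.
Set Implicit Arguments. Unset Strict Implicit. Unset Printing Implicit Defensive.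
Import GRing.Theory Num.Theory.
Local Open Scope ring_scope.

(* Let M be the set of real m x n matrices of rank at most r, and write
   colperm tau X for the matrix whose column j is that of X permuted by tau j;
   the two successive shuffles of the theorem compose to a single colperm.

   1. M is irreducible.  Every point of M is a product A *m B with A of width
      r, so two points of M are joined by the curve
      t |-> (A0 + t (A1 - A0)) *m (B0 + t (B1 - B0)) inside M, along which
      polynomials restrict to univariate ones.  Hence if F * G vanishes on M
      and G does not, F vanishes on M; so the nonzero locus in M of a
      polynomial not vanishing on M is Zariski-open and dense in M, and such
      polynomials are closed under products.
   2. Rank certificates.  The sum of squares of the k x k minors of
      colperm tau applied to the generic matrix is a polynomial whose
      nonvanishing at X forces rank (colperm tau X) >= k.  Explicit rank-r
      matrices show that it does not vanish on M for k = r and tau = id, and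
      for k = r + 1 whenever tau is not constant.
   3. U is the nonzero locus of the product P of these certificates.  On U
      the rank is exactly r; a constant tau yields a row permutation of X
      (rank r), and a nonconstant one a matrix of rank > r. *)

Section LowRankIrreducible.
Variables (R : realType) (m n r : nat).

Lemma lowrank_mul (A : 'M[R]_(m, r)) (B : 'M[R]_(r, n)) : lowrank r (A *m B).
Proof. exact: leq_trans (mxrankM_maxl _ _) (rank_leq_col A). Qed.

Lemma lowrank_factor (X : 'M[R]_(m, n)) :
  lowrank r X -> exists A : 'M[R]_(m, r), exists B : 'M[R]_(r, n), X = A *m B.
Proof.
move=> hX; exists (col_ebase X *m pid_mx (\rank X)), (pid_mx (\rank X) *m row_ebase X).
rewrite mulmxA -(mulmxA (col_ebase X)) mul_pid_mx minnn (minn_idPr hX).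
by rewrite mulmx_ebase.
Qed.

(* A real polynomial vanishing everywhere is zero (R is infinite). *)
Lemma poly_eq0_of_roots (p : {poly R}) : (forall t, p.[t] = 0) -> p = 0.
Proof.
move=> p0; apply: contraTeq isT => pn0.
set s := [seq i%:R : R | i <- iota 0 (size p)].
have s_roots : all (root p) s by apply/allP => x /mapP [i _ ->]; apply/rootP.
have s_uniq : uniq s.
  by rewrite map_inj_uniq ?iota_uniq // => i j /eqP; rewrite eqr_nat => /eqP.
by have := max_poly_roots pn0 s_roots s_uniq; rewrite size_map size_iota ltnn.
Qed.

Lemma mmap_horner (N : nat) (h : 'I_N -> {poly R}) (F : {mpoly R[N]}) (t : R) :
  (mmap polyC h F).[t] = meval (fun i => (h i).[t]) F.
Proof.
rewrite mevalE /mmap horner_sum; apply: eq_bigr => mu _.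
rewrite hornerCM /mmap1 horner_prod; congr (_ * _).
by apply: eq_bigr => i _; rewrite horner_exp.
Qed.

Lemma lowrank_segment (X0 X1 : 'M[R]_(m, n)) :
  lowrank r X0 -> lowrank r X1 ->
  exists gamma : R -> 'M[R]_(m, n),
    [/\ gamma 0 = X0, gamma 1 = X1, forall t, lowrank r (gamma t)
      & forall F, exists p : {poly R}, forall t, p.[t] = mxpoly_eval F (gamma t)].
Proof.
move=> /lowrank_factor [A0 [B0 ->]] /lowrank_factor [A1 [B1 ->]].
pose gamma t := (A0 + t *: (A1 - A0)) *m (B0 + t *: (B1 - B0)).
pose Ap : 'M[{poly R}]_(m, r) := map_mx polyC A0 + 'X *: map_mx polyC (A1 - A0).
pose Bp : 'M[{poly R}]_(r, n) := map_mx polyC B0 + 'X *: map_mx polyC (B1 - B0).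
have gammaE t : map_mx (horner_eval t) (Ap *m Bp) = gamma t.
  apply/matrixP => i j; rewrite !mxE rmorph_sum; apply: eq_bigr => l _.
  by rewrite !mxE !rmorphM !rmorphD !rmorphM /= !horner_evalE !hornerE.
exists gamma; split.
- by rewrite /gamma !scale0r !addr0.
- by rewrite /gamma !scale1r ![A0 + _]addrC ![B0 + _]addrC !subrK.
- by move=> t; apply: lowrank_mul.
move=> F; exists (mmap polyC (fun k => mxvec (Ap *m Bp) 0 k) F) => t.
rewrite mmap_horner /mxpoly_eval; apply: meval_eq => k.
by rewrite -(gammaE t) -map_mxvec mxE.
Qed.

Lemma lowrank_prime (F G : {mpoly R[m * n]}) :
  (forall X, lowrank r X -> mxpoly_eval F X * mxpoly_eval G X = 0) ->
  (exists2 X0, lowrank r X0 & mxpoly_eval G X0 != 0) ->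
  forall X, lowrank r X -> mxpoly_eval F X = 0.
Proof.
move=> FG0 [X0 hX0 GX0] X hX.
have [gamma [gamma0 gamma1 gammaM gammaP]] := lowrank_segment hX0 hX.
have [pF pFE] := gammaP F; have [pG pGE] := gammaP G.
have pFG0 : pF * pG = 0.
  by apply: poly_eq0_of_roots => t; rewrite hornerM pFE pGE FG0.
have pG0 : pG != 0 by apply: contraNneq GX0 => pG0; rewrite -gamma0 -pGE pG0 horner0.
move/eqP: pFG0; rewrite mulf_eq0 (negPf pG0) orbF => /eqP pF0.
by rewrite -gamma1 -pFE pF0 horner0.
Qed.

Definition nonvanishing (q : {mpoly R[m * n]}) : Prop :=
  exists2 X, lowrank r X & mxpoly_eval q X != 0.

(* By irreducibility, products of nonvanishing polynomials are nonvanishing. *)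
Lemma nonvanishing_mul (F G : {mpoly R[m * n]}) :
  nonvanishing F -> nonvanishing G -> nonvanishing (F * G).
Proof.
move=> [X hX FX] nvG; apply: NNPP => nvFG.
have FG0 X' : lowrank r X' -> mxpoly_eval F X' * mxpoly_eval G X' = 0.
  move=> hX'; rewrite /mxpoly_eval -mevalM.
  by apply: NNPP => FGX'; apply: nvFG; exists X' => //; apply/eqP.
by move: FX; rewrite (lowrank_prime FG0 nvG hX) eqxx.
Qed.

Lemma nonzero_locus_open (q : {mpoly R[m * n]}) :
  zariski_open_in (lowrank r) (fun X => lowrank r X /\ mxpoly_eval q X != 0).
Proof.
split=> [X [] // | ]; exists (fun p => p = q) => X; split.
  move=> [hX notU]; split=> // _ ->.
  by have [// | qX] := eqVneq (mxpoly_eval q X) 0; case: notU.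
by move=> [hX q0]; split=> // -[_]; rewrite q0 ?eqxx.
Qed.

Lemma nonzero_locus_dense (q : {mpoly R[m * n]}) :
  nonvanishing q ->
  zariski_dense_in (lowrank r) (fun X => lowrank r X /\ mxpoly_eval q X != 0).
Proof.
move=> nvq Z [S ZE] UZ X hX; apply/ZE; split=> // p Sp.
apply: (lowrank_prime _ nvq) => // Y hY.
have [-> | qY] := eqVneq (mxpoly_eval q Y) 0; first by rewrite mulr0.
by have [_ pY0] := (ZE Y).1 (UZ Y (conj hY qY)); rewrite pY0 ?mul0r.
Qed.

End LowRankIrreducible.

Section ColumnPermutation.
Variables (m n : nat).

Definition colperm (T : Type) (tau : 'I_n -> 'S_m) (M : 'M[T]_(m, n)) : 'M[T]_(m, n) :=
  \matrix_(i, j) M (tau j i) j.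

Lemma permcolsE (R : realType) (tau : 'I_n -> 'S_m) (Y : 'M[R]_(m, n)) :
  permcols tau Y = colperm tau Y.
Proof. by apply/matrixP => i j; rewrite [LHS]mxE -row_permE !mxE. Qed.

Lemma colperm_comp (T : Type) (p q : 'I_n -> 'S_m) (M : 'M[T]_(m, n)) :
  colperm p (colperm q M) = colperm (fun j => p j * q j)%g M.
Proof. by apply/matrixP => i j; rewrite !mxE permM. Qed.

Lemma colperm_id (T : Type) (M : 'M[T]_(m, n)) : colperm (fun _ => 1%g) M = M.
Proof. by apply/matrixP => i j; rewrite mxE perm1. Qed.

Lemma colperm_const (T : pzRingType) (tau : 'I_n -> 'S_m) (s : 'S_m)
    (M : 'M[T]_(m, n)) :
  (forall j, tau j = s) -> colperm tau M = perm_mx s *m M.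
Proof. by move=> tauE; rewrite -row_permE; apply/matrixP => i j; rewrite !mxE tauE. Qed.

Lemma mxrank_perm_mul (F : fieldType) (s : 'S_m) (M : 'M[F]_(m, n)) :
  \rank (perm_mx s *m M) = \rank M.
Proof. by rewrite eqmxMfull // row_full_unit unitmx_perm. Qed.

Lemma map_colperm (S T : Type) (f : S -> T) (tau : 'I_n -> 'S_m) (M : 'M[S]_(m, n)) :
  map_mx f (colperm tau M) = colperm tau (map_mx f M).
Proof. by apply/matrixP => i j; rewrite !mxE. Qed.

End ColumnPermutation.

Section Minors.

(* The sum of the squares of all k x k minors of M (rows and columns may
   repeat, which only adds zero minors). *)
Definition minor_sqsum (T : comNzRingType) (p q k : nat) (M : 'M[T]_(p, q)) : T :=
  \sum_(f : {ffun 'I_k -> 'I_p}) \sum_(g : {ffun 'I_k -> 'I_q}) \det (mxsub f g M) ^+ 2.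

Lemma minor_sqsum_map (S T : comNzRingType) (phi : {rmorphism S -> T})
    (p q k : nat) (M : 'M[S]_(p, q)) :
  phi (minor_sqsum k M) = minor_sqsum k (map_mx phi M).
Proof.
rewrite rmorph_sum; apply: eq_bigr => f _; rewrite rmorph_sum; apply: eq_bigr => g _.
by rewrite rmorphXn -det_map_mx map_mxsub.
Qed.

Lemma mxrank_mxsub (F : fieldType) (p q k l : nat) (f : 'I_k -> 'I_p)
    (g : 'I_l -> 'I_q) (M : 'M[F]_(p, q)) :
  (\rank (mxsub f g M) <= \rank M)%N.
Proof.
rewrite mxsubrc; apply: leq_trans (mxrankS (rowsub_sub _ _)) _.
by rewrite -[M in colsub _ M]mulmx1 -mulmx_colsub mxrankM_maxl.
Qed.

(* In an ordered field a sum of squares vanishes iff all its terms do. *)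
Lemma minor_sqsum_neq0 (R : realFieldType) (p q k : nat) (M : 'M[R]_(p, q)) :
  minor_sqsum k M != 0 <->
  exists f : {ffun 'I_k -> 'I_p}, exists g : {ffun 'I_k -> 'I_q}, \det (mxsub f g M) != 0.
Proof.
split=> [nz | [f [g dfg]]].
  have /existsP [f /existsP [g dfg]] :
      [exists f : {ffun 'I_k -> 'I_p}, exists g : {ffun 'I_k -> 'I_q},
         \det (mxsub f g M) != 0].
    apply: contraNT nz => /existsPn none; apply/eqP.
    rewrite /minor_sqsum big1 // => f _; rewrite big1 // => g _.
    by move/existsPn/(_ g)/negPn/eqP: (none f) => ->; rewrite expr0n.
  by exists f, g.
apply: contra dfg => /eqP /psumr_eq0P outer.
have /psumr_eq0P inner : \sum_(g' : {ffun 'I_k -> 'I_q}) \det (mxsub f g' M) ^+ 2 = 0.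
  by apply: outer => // f' _; apply: sumr_ge0 => g' _; apply: sqr_ge0.
by rewrite -sqrf_eq0 inner // => g' _; apply: sqr_ge0.
Qed.

(* A nonzero minor of size k is an invertible k x k submatrix. *)
Lemma minor_sqsum_rank (R : realFieldType) (p q k : nat) (M : 'M[R]_(p, q)) :
  minor_sqsum k M != 0 -> (k <= \rank M)%N.
Proof.
move=> /minor_sqsum_neq0 [f [g dfg]].
have unit_fg : mxsub f g M \in unitmx by rewrite unitmxE unitfE.
by rewrite -{1}(mxrank_unit unit_fg) mxrank_mxsub.
Qed.

End Minors.

Lemma perm_two_points (N : nat) (z0 z1 a b : 'I_N) :
  z0 != z1 -> a != b -> exists s : 'S_N, s z0 = a /\ s z1 = b.
Proof.
move=> z01 ab; pose b' := tperm z0 a b.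
have b'z0 : b' != z0.
  by rewrite -[X in _ != X](tpermR z0 a) (inj_eq perm_inj); apply: contraNneq ab => ->.
exists (tperm z1 b' * tperm z0 a)%g; rewrite !permM tpermL; split.
- by rewrite [tperm z1 b' z0]tpermD ?tpermL // eq_sym.
- by rewrite /b' tpermK.
Qed.

Section RankTest.
Variables (R : realType) (m n : nat).

Definition generic_mx : 'M[{mpoly R[m * n]}]_(m, n) :=
  \matrix_(i, j) 'X_(mxvec_index i j).

Lemma meval_generic_mx (X : 'M[R]_(m, n)) :
  map_mx (meval (fun k => mxvec X 0 k)) generic_mx = X.
Proof. by apply/matrixP => i j; rewrite !mxE /= mevalXU mxvecE. Qed.

Definition rank_test (k : nat) (tau : 'I_n -> 'S_m) : {mpoly R[m * n]} :=
  minor_sqsum k (colperm tau generic_mx).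

Lemma rank_testE k (tau : 'I_n -> 'S_m) (X : 'M[R]_(m, n)) :
  mxpoly_eval (rank_test k tau) X = minor_sqsum k (colperm tau X).
Proof. by rewrite /mxpoly_eval minor_sqsum_map map_colperm meval_generic_mx. Qed.

Lemma rank_test_rank k (tau : 'I_n -> 'S_m) (X : 'M[R]_(m, n)) :
  mxpoly_eval (rank_test k tau) X != 0 -> (k <= \rank (colperm tau X))%N.
Proof. by rewrite rank_testE; apply: minor_sqsum_rank. Qed.

Variable r : nat.

(* Witness for rank_test k tau on M: select the k entries (f l, g l) of
   colperm tau X, with g injective so that each column holds one of them,
   and with r labels c l such that entries sharing a label come from the
   same row of X as the label's representative d (c l).  Then X = A *m B,
   where A sends labels to rows and B columns to labels, has the identity
   as its (f, g)-minor. *)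
Lemma rank_test_witness k (tau : 'I_n -> 'S_m) (f : 'I_k -> 'I_m) (g : 'I_k -> 'I_n)
    (c : 'I_k -> 'I_r) (d : 'I_r -> 'I_k) :
  injective f -> injective g ->
  (forall l, tau (g (d (c l))) (f (d (c l))) = tau (g l) (f l)) ->
  nonvanishing r (rank_test k tau).
Proof.
move=> f_inj g_inj cdE.
pose A : 'M[R]_(m, r) := \matrix_(i, x) (i == tau (g (d x)) (f (d x)))%:R.
pose B : 'M[R]_(r, n) := \matrix_(x, j) [exists l, (g l == j) && (c l == x)]%:R.
have BE x l : B x (g l) = (c l == x)%:R.
  rewrite mxE; congr (nat_of_bool _)%:R; apply/existsP/idP => [[l']|cl].
    by case/andP=> /eqP /g_inj ->.
  by exists l; rewrite eqxx.
exists (A *m B); first exact: lowrank_mul.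
rewrite rank_testE; apply/minor_sqsum_neq0.
exists [ffun l => f l], [ffun l => g l].
suff -> : mxsub [ffun l => f l] [ffun l => g l] (colperm tau (A *m B)) = 1%:M.
  by rewrite det1 oner_neq0.
apply/matrixP => l l'; rewrite !mxE !ffunE (bigD1 (c l')) //= big1 ?addr0.
  by rewrite BE eqxx mulr1 mxE cdE (inj_eq perm_inj) (inj_eq f_inj).
by move=> x cx; rewrite BE eq_sym (negPf cx) mulr0.
Qed.

Lemma rank_test_id_nonvanishing :
  (r <= m)%N -> (r <= n)%N -> nonvanishing r (rank_test r (fun _ => 1%g)).
Proof.
move=> rm rn.
by apply: (@rank_test_witness r _ (widen_ord rm) (widen_ord rn) id id)
  => // x y /(congr1 val) /= /val_inj.
Qed.

(* If tau j != tau k, some (r+1) x (r+1) minor of colperm tau does not vanish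
   on M: pick x with tau j x != tau k x and y with tau k y = tau j x; the
   entries (x, j) and (y, k) then come from the same row of X and can share
   a label. *)
Lemma rank_test_nonconstant_nonvanishing (tau : 'I_n -> 'S_m) (j k : 'I_n) :
  (0 < r)%N -> (r < m)%N -> (r < n)%N -> tau j != tau k ->
  nonvanishing r (rank_test r.+1 tau).
Proof.
move=> r0 rm rn tau_jk.
have [x tau_x] : exists x, tau j x != tau k x.
  apply/existsP; apply: contraNT tau_jk => /existsPn same; apply/eqP/permP => x.
  by apply/eqP/negPn/same.
pose y := (tau k)^-1%g (tau j x).
have tau_y : tau k y = tau j x by rewrite permKV.
have xy : x != y by apply: contraNneq tau_x => e; rewrite {2}e tau_y.
have jk : j != k by apply: contraNneq tau_jk => ->.
pose i0 : 'I_r.+1 := ord0; pose i1 : 'I_r.+1 := lift ord0 (Ordinal r0).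
have [s [s0 s1]] := @perm_two_points _ (widen_ord rm i0) (widen_ord rm i1) _ _ isT xy.
have [t [t0 t1]] := @perm_two_points _ (widen_ord rn i0) (widen_ord rn i1) _ _ isT jk.
have c_lt (l : 'I_r.+1) : (l.-1 < r)%N by case: l => [[|l] //=]; rewrite ltnS.
pose c (l : 'I_r.+1) : 'I_r := Ordinal (c_lt l).
pose d (x : 'I_r) : 'I_r.+1 := lift ord0 x.
apply: (@rank_test_witness r.+1 tau (s \o widen_ord rm) (t \o widen_ord rn) c d).
- by move=> a b /perm_inj /(congr1 val) /= /val_inj.
- by move=> a b /perm_inj /(congr1 val) /= /val_inj.
move=> l; have [-> | l0] := eqVneq l i0.
  have -> : d (c i0) = i1 by apply: val_inj.
  by rewrite /= s0 s1 t0 t1 tau_y.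
have -> // : d (c l) = l.
by apply: val_inj; rewrite /= /bump /= add1n prednK // lt0n.
Qed.

End RankTest.

Section GenericLocus.
Variables (R : realType) (m n r : nat).

Definition nonconstant (tau : 'I_n -> 'S_m) : bool := [exists j, exists k, tau j != tau k].

Definition separating_poly : {mpoly R[m * n]} :=
  rank_test R r (fun _ => 1%g) *
  \prod_(tau : {ffun 'I_n -> 'S_m} | nonconstant tau) rank_test R r.+1 tau.

Lemma separating_poly_nonvanishing :
  (0 < r)%N -> (r < m)%N -> (r < n)%N -> nonvanishing r separating_poly.
Proof.
move=> r0 rm rn; apply: nonvanishing_mul.
  exact: rank_test_id_nonvanishing (ltnW rm) (ltnW rn).
apply: (big_ind (nonvanishing r)).
- by exists 0; rewrite /lowrank ?mxrank0 // /mxpoly_eval meval1 oner_neq0.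
- exact: nonvanishing_mul.
move=> tau /existsP [j /existsP [k tau_jk]].
exact: rank_test_nonconstant_nonvanishing r0 rm rn tau_jk.
Qed.

Variable X : 'M[R]_(m, n).
Hypothesis X_lowrank : lowrank r X.
Hypothesis X_generic : mxpoly_eval separating_poly X != 0.

Let factors_neq0 :
  mxpoly_eval (rank_test R r (fun _ => 1%g)) X != 0 /\
  forall tau : {ffun 'I_n -> 'S_m}, nonconstant tau ->
    mxpoly_eval (rank_test R r.+1 tau) X != 0.
Proof.
move: X_generic; rewrite /mxpoly_eval rmorphM rmorph_prod mulf_eq0 negb_or.
by case/andP=> -> /prodf_neq0 prod_neq0; split=> // tau; apply: prod_neq0.
Qed.

Lemma separating_rank : \rank X = r.
Proof.
apply/eqP; rewrite eqn_leq X_lowrank -[X in (_ <= \rank X)%N]colperm_id.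
exact: rank_test_rank factors_neq0.1.
Qed.

Lemma separating_nonconstant (tau : 'I_n -> 'S_m) :
  nonconstant tau -> (r < \rank (colperm tau X))%N.
Proof.
case/existsP=> j /existsP [k tau_jk].
have nc_ffun : nonconstant [ffun i => tau i].
  by apply/existsP; exists j; apply/existsP; exists k; rewrite !ffunE.
have := rank_test_rank (factors_neq0.2 _ nc_ffun).
by congr (_ <= \rank _)%N; apply/matrixP => i j'; rewrite !mxE ffunE.
Qed.

End GenericLocus.

Theorem theorem1 (R : realType) (m n r : nat) :
  (0 < m)%N -> (0 < n)%N -> (0 < r)%N -> (r < minn m n)%N ->
  exists U : 'M[R]_(m, n) -> Prop,
    zariski_open_in (@lowrank R m n r) U /\
    zariski_dense_in (@lowrank R m n r) U /\
    forall Xs : 'M[R]_(m, n), U Xs ->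
    forall pt : 'I_n -> 'S_m,
    forall p : 'I_n -> 'S_m,
      (r <= \rank (permcols p (permcols pt Xs)))%N /\
      (\rank (permcols p (permcols pt Xs)) = r <->
         exists s : 'S_m, permcols p (permcols pt Xs) = perm_mx s *m Xs).
Proof.
move=> _ n0 r0; rewrite leq_min => /andP [rm rn].
pose P := separating_poly R m n r.
exists (fun X => lowrank r X /\ mxpoly_eval P X != 0).
split; first exact: nonzero_locus_open.
split; first exact: nonzero_locus_dense (separating_poly_nonvanishing R r0 rm rn).
move=> Xs [Xs_lowrank Xs_generic] pt p.
rewrite !permcolsE colperm_comp; set tau := fun j => (p j * pt j)%g.
have rank_Xs := separating_rank Xs_lowrank Xs_generic.
have [nc_tau | c_tau] := boolP (nonconstant tau).
  have gt_r := separating_nonconstant Xs_generic nc_tau.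
  split; first exact: ltnW.
  split=> [eq_r | [s perm_s]]; first by rewrite eq_r ltnn in gt_r.
  by rewrite perm_s mxrank_perm_mul rank_Xs ltnn in gt_r.
have tauE j : tau j = tau (Ordinal n0).
  apply/eqP; apply: contraNT c_tau => ne.
  by apply/existsP; exists j; apply/existsP; exists (Ordinal n0).
rewrite (colperm_const _ tauE) mxrank_perm_mul rank_Xs; split=> //; split=> // _.
by exists (tau (Ordinal n0)).
Qed.
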